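(* Let $n\ge 3$ and let $K$ be a proper $4$-coloring of $H_2(n,n-1)$. The following are equivalent: (i) there exist $v,w\in\mathcal{N}(0)=\{u\in\mathbb{Z}_2^n:\mathrm{wt}(u)\ge n-1\}$ such that $T(K)=\{(x,y): x+y\in\{v,w\}\}$; (ii) $\mathrm{rb}(K)=\frac{2}{n+1}$; (iii) the transition edges of $K$ tile the graph in $4$-cycles. Moreover, if one (hence each) of these holds, then the coloring of a single $4$-cycle of transition edges uniquely determines the coloring of the entire graph: if $K'$ is another proper $4$-coloring satisfying these conditions, $C$ is a $4$-cycle whose edges are transition edges for both $K$ and $K'$, and $K$ and $K'$ agree on the vertices of $C$, then $K=K'$.
   Context: $H_2(n,n-1)$ is the simple undirected graph with vertex set $\mathbb{Z}_2^n$ in which $x,y$ are adjacent iff their Hamming distance is at least $n-1$; $\mathrm{wt}$ is Hamming weight. For a simple graph $G=(V,E)$ and a proper $k$-coloring $K$, an edge $(x,y)\in E$ is a transition edge for $K$ if swapping the colors of $x$ and $y$ (all other colors unchanged) yields again a proper $k$-coloring; $T(K)$ is the set of transition edges and $\mathrm{rb}(K)=|T(K)|/|E|$ is the robustness. A set $M$ of edges tiles the graph in $4$-cycles if $M$ is the union of pairwise vertex-disjoint and edge-disjoint $4$-cycles and every vertex lies on exactly one of these cycles. *)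

From mathcomp Require Import all_boot all_order all_algebra.
Set Implicit Arguments. Unset Strict Implicit. Unset Printing Implicit Defensive.

Section Graphs.
Variable T : finType.
Variable r : rel T.

Definition edges : {set {set T}} := [set e : {set T} | [exists x, exists y, r x y && (e == [set x; y])]].

Definition proper_col (k : nat) (K : {ffun T -> 'I_k}) : bool :=
  [forall x, forall y, r x y ==> (K x != K y)].

Definition swap_col (k : nat) (K : {ffun T -> 'I_k}) (x y : T) : {ffun T -> 'I_k} :=
  [ffun z => if z == x then K y else if z == y then K x else K z].

Definition is_transition (k : nat) (K : {ffun T -> 'I_k}) (x y : T) : bool :=
  r x y && proper_col (swap_col K x y).

Definition trans_edges (k : nat) (K : {ffun T -> 'I_k}) : {set {set T}} :=
  [set e : {set T} | [exists x, exists y, is_transition K x y && (e == [set x; y])]].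

Definition rb (k : nat) (K : {ffun T -> 'I_k}) : rat :=
  (#|trans_edges K|%:R / #|edges|%:R)%R.

Definition cyc4 (a b c d : T) : {set {set T}} :=
  [set [set a; b]; [set b; c]; [set c; d]; [set d; a]].

Definition is_4cycle (C : {set {set T}}) : Prop :=
  exists a b c d : T, [/\ uniq [:: a; b; c; d],
    [&& r a b, r b c, r c d & r d a] & C = cyc4 a b c d].

Definition verts (C : {set {set T}}) : {set T} := \bigcup_(e in C) e.

Definition tiles_in_4cycles (M : {set {set T}}) : Prop :=
  exists F : {set {set {set T}}},
    [/\ forall C, C \in F -> is_4cycle C,
        M = \bigcup_(C in F) C,
        forall C1 C2, C1 \in F -> C2 \in F -> C1 != C2 ->
          [disjoint verts C1 & verts C2] /\ [disjoint C1 & C2]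
      & forall x : T, #|[set C in F | x \in verts C]| = 1%N].

End Graphs.

Definition V (n : nat) := {ffun 'I_n -> bool}.

Definition vadd (n : nat) (x y : V n) : V n := [ffun i => x i (+) y i].

Definition wt (n : nat) (x : V n) : nat := #|[set i | x i]|.
Definition hdist (n : nat) (x y : V n) : nat := #|[set i | x i != y i]|.

Definition H2 (n : nat) : rel (V n) := fun x y => (n.-1 <= hdist x y)%N.

Definition N0 (n : nat) : {set V n} := [set u : V n | (n.-1 <= wt u)%N].
Arguments H2 n x y : clear implicits.
Arguments N0 n : clear implicits.

From mathcomp Require Import all_boot all_order all_algebra zify.
Set Implicit Arguments. Unset Strict Implicit. Unset Printing Implicit Defensive.

(* H_2(n, n-1) is the Cayley graph of Z_2^n with connection set N(0), of size
   n + 1 >= 4. In a proper 4-colouring K, a vertex x, its transition neighbours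
   and any further neighbour get pairwise distinct colours, so x lies on at most
   two transition edges. Counting edges, rb(K) = 2/(n+1) iff every vertex lies on
   exactly two, iff |T(K)| = |V|, which a tiling by 4-cycles forces. When every
   vertex lies on two transition edges, their directions x + y are the same at
   adjacent vertices (otherwise some vertex would need a fifth colour), hence form
   one pair {v, w}, and T(K) splits into the squares x, x + v, x + v + w, x + w.
   Finally, a non-transition neighbour x + g of x must take the colour of x + v + w,
   the one colour missing around x, so two such colourings that agree on one
   square agree on its neighbouring squares, hence everywhere. *)

Section Edges.
Variable T : finType.
Implicit Types (a b c d x y : T) (r : rel T).

Lemma eq_set2 a b c d :
  ([set a; b] == [set c; d]) = (a == c) && (b == d) || (a == d) && (b == c).
Proof.
apply/eqP/idP => [E|/orP[]/andP[/eqP-> /eqP->] //]; last exact: setUC.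
have /set2P[] : a \in [set c; d] by rewrite -E set21.
all: have /set2P[] : b \in [set c; d] by rewrite -E set22.
all: have /set2P[] : c \in [set a; b] by rewrite E set21.
all: have /set2P[] : d \in [set a; b] by rewrite E set22.
all: by move=> *; subst; rewrite !eqxx ?orbT.
Qed.

Lemma mem_edges r x y : symmetric r -> ([set x; y] \in edges r) = r x y.
Proof.
move=> r_sym; rewrite inE; apply/existsP/idP => [[a /existsP[b]]|rxy].
  by rewrite eq_set2 => /andP[rab] /orP[]/andP[/eqP-> /eqP->] //; rewrite r_sym.
by exists x; apply/existsP; exists y; rewrite rxy eqxx.
Qed.

Lemma edges_inj r1 r2 : symmetric r1 -> symmetric r2 ->
  edges r1 = edges r2 -> r1 =2 r2.
Proof. by move=> sym1 sym2 E x y; rewrite -mem_edges // E mem_edges. Qed.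

Lemma eq_edges r1 r2 : r1 =2 r2 -> edges r1 = edges r2.
Proof.
by move=> E; apply/setP => e; rewrite !inE; apply: eq_existsb => x;
  apply: eq_existsb => y; rewrite E.
Qed.

Lemma sum_card_incident (I : finType) (F : {set I}) (f : I -> {set T}) :
  \sum_x #|[set i in F | x \in f i]| = \sum_(i in F) #|f i|.
Proof.
transitivity (\sum_x \sum_(i in F) (x \in f i : nat)).
  apply: eq_bigr => x _; rewrite -sum1_card big_mkcond [RHS]big_mkcond /=.
  by apply: eq_bigr => i _; rewrite inE; case: (i \in F); case: (x \in f i).
rewrite exchange_big; apply: eq_bigr => i _.
by rewrite -sum1_card [RHS]big_mkcond; apply: eq_bigr => x _; case: (x \in f i).
Qed.

Lemma sum_card_nbrs r : symmetric r -> irreflexive r ->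
  \sum_x #|[set y | r x y]| = 2 * #|edges r|.
Proof.
move=> r_sym r_irr.
have nbrsE x : #|[set y | r x y]| = #|[set e in edges r | x \in e]|.
  have -> : [set e in edges r | x \in e] = [set [set x; y] | y in [set y | r x y]].
    apply/setP => e; rewrite inE; apply/andP/imsetP => [[]|[y]]; last first.
      by rewrite inE => rxy ->; split; [rewrite mem_edges | exact: set21].
    rewrite inE => /existsP[a /existsP[b /andP[rab /eqP->]]] /set2P[->|->].
      by exists b; rewrite ?inE.
    by exists a; rewrite ?inE 1?r_sym // setUC.
  rewrite card_in_imset // => y z _ _ /eqP.
  by rewrite eq_set2 eqxx /= => /orP[/eqP|/andP[/eqP<- /eqP]].
under eq_bigr do rewrite nbrsE.
rewrite (sum_card_incident (edges r) (fun e => e)).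
rewrite mulnC -sum_nat_const; apply: eq_bigr => e; rewrite inE.
case/existsP => a /existsP[b /andP[rab /eqP ->]].
by rewrite cards2; case: eqP rab => // ->; rewrite r_irr.
Qed.

Lemma card_edges_regular r (d : nat) : symmetric r -> irreflexive r ->
  (forall x, #|[set y | r x y]| = d) -> 2 * #|edges r| = d * #|T|.
Proof.
move=> r_sym r_irr r_regular; rewrite -sum_card_nbrs //.
by rewrite (eq_bigr _ (fun x _ => r_regular x)) sum_nat_const mulnC.
Qed.

Lemma cyc4E a b c d :
  cyc4 a b c d =i [:: [set a; b]; [set b; c]; [set c; d]; [set d; a]].
Proof. by move=> e; rewrite /cyc4 !inE !orbA. Qed.

Lemma cyc4_rot a b c d : cyc4 a b c d = cyc4 b c d a.
Proof. by apply/setP => e; rewrite !cyc4E !inE orbC !orbA. Qed.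

Lemma cyc4_rev a b c d : cyc4 a b c d = cyc4 d c b a.
Proof.
apply/setP => e; rewrite !cyc4E !inE [[set d; c]]setUC [[set c; b]]setUC.
rewrite [[set b; a]]setUC [[set a; d]]setUC.
by case: (e == [set a; b]); case: (e == [set c; d]); rewrite ?orbT ?orbF.
Qed.

Lemma verts_cyc4 a b c d : verts (cyc4 a b c d) =i [:: a; b; c; d].
Proof.
move=> y; apply/bigcupP/idP => [[e]|].
  by rewrite cyc4E !inE => /or4P[]/eqP-> /set2P[]->; rewrite eqxx ?orbT.
rewrite !inE => /or4P[]/eqP->.
- by exists [set a; b]; rewrite ?cyc4E ?inE ?eqxx.
- by exists [set b; c]; rewrite ?cyc4E ?inE ?eqxx ?orbT.
- by exists [set c; d]; rewrite ?cyc4E ?inE ?eqxx ?orbT.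
- by exists [set d; a]; rewrite ?cyc4E ?inE ?eqxx ?orbT.
Qed.

Lemma disjoint_cyc4 a b c d a' b' c' d' :
  [disjoint verts (cyc4 a b c d) & verts (cyc4 a' b' c' d')] ->
  [disjoint cyc4 a b c d & cyc4 a' b' c' d'].
Proof.
move=> /pred0P vdisj; apply/pred0P => e /=; apply/negP => /andP[e1 e2].
have [y ye] : exists y, y \in e.
  by move: e1; rewrite cyc4E !inE => /or4P[]/eqP->; eexists; apply: set21.
have in_verts (C : {set {set T}}) : e \in C -> y \in verts C.
  by move=> eC; apply/bigcupP; exists e.
by move: (vdisj y) => /=; rewrite !in_verts.
Qed.

Lemma card_cyc4 a b c d : uniq [:: a; b; c; d] ->
  #|cyc4 a b c d| = 4 /\ #|verts (cyc4 a b c d)| = 4.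
Proof.
move=> u; rewrite (eq_card (cyc4E a b c d)) (eq_card (verts_cyc4 a b c d)).
split; apply/card_uniqP => //.
move: u; rewrite /= !inE !negb_or !eq_set2 !eqxx !andbT /=.
case/and3P => /and3P[ab ac ad] /andP[bc bd] cd.
by rewrite ![_ == a]eq_sym (negbTE ab) (negbTE ac) (negbTE ad) (negbTE bc)
  (negbTE bd) (negbTE cd) ?andbF.
Qed.

Lemma card_tiling r M : tiles_in_4cycles r M -> #|M| = #|T|.
Proof.
case=> F [F4 ME Fdisj Fcover].
have card4 C : C \in F -> #|C| = 4 /\ #|verts C| = 4.
  by case/F4 => a [b [c [d [u _ ->]]]]; apply: card_cyc4.
have Ftriv : trivIset F.
  by apply/trivIsetP => A B A_F B_F /(Fdisj A B A_F B_F)[].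
transitivity (\sum_(C in F) #|verts C|).
  rewrite ME -(eqP Ftriv); apply: eq_bigr => C C_F.
  by have [-> ->] := card4 C C_F.
rewrite -sum_card_incident -sum1_card; apply: eq_bigr => x _.
by rewrite Fcover.
Qed.

End Edges.

Section ProperColouring.
Variables (T : finType) (r : rel T) (k : nat) (L : {ffun T -> 'I_k}).
Hypotheses (r_sym : symmetric r) (L_proper : proper_col r L).
Implicit Types x y z : T.
Notation tr := (is_transition r L).

Definition trans_nbrs x := [set y | is_transition r L x y].

Lemma trans_edgesE : trans_edges r L = edges (is_transition r L).
Proof. by []. Qed.

Lemma proper_colP x y : r x y -> L x != L y.
Proof. by move=> rxy; move/forallP/(_ x)/forallP/(_ y): L_proper; rewrite rxy. Qed.

Lemma proper_irr : irreflexive r.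
Proof. by move=> x; apply/negbTE/negP => /proper_colP; rewrite eqxx. Qed.

Lemma swap_colC x y : swap_col L x y = swap_col L y x.
Proof.
by apply/ffunP => z; rewrite !ffunE; case: eqP => [->|_]; case: eqP => // ->.
Qed.

Lemma transitionC x y : tr x y = tr y x.
Proof. by rewrite /is_transition r_sym swap_colC. Qed.

Lemma transition_adj x y : tr x y -> r x y.
Proof. by case/andP. Qed.

Lemma transition_nbr_col x y z : tr x y -> r y z -> z != x -> L z != L x.
Proof.
case/andP => rxy /forallP/(_ y)/forallP/(_ z) swap_ok ryz zx.
have yx : (y == x) = false by apply: contraTF rxy => /eqP->; rewrite proper_irr.
have zy : (z == y) = false by apply: contraTF ryz => /eqP->; rewrite proper_irr.
by move: swap_ok; rewrite ryz !ffunE yx eqxx (negbTE zx) zy eq_sym.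
Qed.

Lemma notin_star_col x c : c != L x -> (forall y, tr x y -> c != L y) ->
  c \notin L @: (x |: trans_nbrs x).
Proof.
move=> cx cy; apply/imsetP => -[y /setU1P[->|]]; rewrite ?inE.
  by move/eqP; rewrite (negbTE cx).
by move=> /cy/negbTE + /eqP => ->.
Qed.

Lemma card_star_col x : #|L @: (x |: trans_nbrs x)| = #|trans_nbrs x|.+1.
Proof.
rewrite card_in_imset ?cardsU1 ?inE /is_transition ?proper_irr //.
move=> y y'; rewrite !inE => /predU1P[->|txy] /predU1P[->|txy'] // /eqP; apply: contraTeq.
- by move=> _; apply: proper_colP; apply: transition_adj.
- by move=> _; rewrite eq_sym; apply: proper_colP; apply: transition_adj.
- rewrite eq_sym [L y == _]eq_sym => yy'.
  by apply: transition_nbr_col (transition_adj txy') yy'; rewrite transitionC.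
Qed.

Lemma nontrans_nbr_col x z : r x z -> ~~ tr x z -> L z \notin L @: (x |: trans_nbrs x).
Proof.
move=> rxz ntz; apply: notin_star_col => [|y txy]; first by rewrite eq_sym proper_colP.
rewrite transitionC in txy; apply: (transition_nbr_col txy rxz).
by apply/eqP => zy; move: ntz; rewrite zy transitionC txy.
Qed.

Lemma card_trans_nbrs_lt x : #|trans_nbrs x| < k.
Proof. by have := max_card (L @: (x |: trans_nbrs x)); rewrite card_star_col card_ord. Qed.

Lemma card_trans_nbrs_le x : k <= #|[set y | r x y]| -> (#|trans_nbrs x|).+2 <= k.
Proof.
move=> k_le_deg.
have [z rxz ntz] : exists2 z, r x z & ~~ tr x z.
  case: (boolP ([set y | r x y] \subset trans_nbrs x)) => [/subset_leq_card|/subsetPn[z]].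
    by move/(leq_trans k_le_deg); rewrite leqNgt card_trans_nbrs_lt.
  by rewrite !inE; exists z.
have := max_card (L z |: L @: (x |: trans_nbrs x)).
by rewrite cardsU1 nontrans_nbr_col // card_star_col card_ord.
Qed.

Lemma off_star_col_eq x c c' : (#|trans_nbrs x|).+2 = k ->
  c \notin L @: (x |: trans_nbrs x) -> c' \notin L @: (x |: trans_nbrs x) -> c = c'.
Proof.
move=> deg_x c_off c'_off.
have : #|~: L @: (x |: trans_nbrs x)| <= 1.
  by have := cardsC (L @: (x |: trans_nbrs x)); rewrite card_star_col card_ord; lia.
by move/card_le1_eqP; apply; rewrite inE.
Qed.

Lemma nontrans_nbr_col_eq x z z' : (#|trans_nbrs x|).+2 = k ->
  r x z -> r x z' -> ~~ tr x z -> ~~ tr x z' -> L z = L z'.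
Proof. by move=> deg_x *; apply: off_star_col_eq deg_x _ _; apply: nontrans_nbr_col. Qed.

End ProperColouring.

Import GRing.Theory Num.Theory.

Section Robustness.
Variables (T : finType) (r : rel T) (d k : nat) (L : {ffun T -> 'I_k}).
Hypotheses (r_sym : symmetric r) (L_proper : proper_col r L).
Hypothesis r_regular : forall x, #|[set y | r x y]| = d.

Lemma sum_card_trans_nbrs : \sum_x #|trans_nbrs r L x| = 2 * #|trans_edges r L|.
Proof.
apply: sum_card_nbrs => [x y|x]; first exact: transitionC.
by rewrite /is_transition (proper_irr L_proper).
Qed.

Lemma card_trans_edges_leif : k <= d ->
  2 * #|trans_edges r L| <= k.-2 * #|T| ?= iff [forall x, #|trans_nbrs r L x| == k.-2].
Proof.
move=> k_le_d; rewrite -sum_card_trans_nbrs mulnC -sum_nat_const.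
apply: leqif_sum => x _; apply: leqif_eq.
have := card_trans_nbrs_le r_sym L_proper (x := x); rewrite r_regular; lia.
Qed.

Lemma rb_eqE : 0 < d -> 0 < #|T| ->
  (rb r L == (k.-2%:R / d%:R)%R) = (2 * #|trans_edges r L| == k.-2 * #|T|).
Proof.
move=> d_gt0 T_gt0.
have card_E := card_edges_regular r_sym (proper_irr L_proper) r_regular.
have E_gt0 : 0 < #|edges r|.
  by rewrite -(ltn_pmul2l (isT : 0 < 2)) card_E muln_gt0 d_gt0.
rewrite /rb eqr_div ?pnatr_eq0 -?lt0n // -!natrM eqr_nat.
rewrite -(eqn_pmul2l (isT : 0 < 2)) -[RHS](eqn_pmul2r d_gt0).
by rewrite mulnA [2 * (k.-2 * _)]mulnCA card_E [d * _]mulnC mulnA.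
Qed.

End Robustness.

Ltac vadd_bits := apply/ffunP => i; rewrite !ffunE;
  repeat match goal with |- context [fun_of_fin ?f ?j] => case: (fun_of_fin f j) end.

Section Vectors.
Variable n : nat.
Implicit Types x y z : V n.

Definition v0 : V n := [ffun=> false].

Lemma vaddC x y : vadd x y = vadd y x.
Proof. by apply/ffunP => i; rewrite !ffunE addbC. Qed.

Lemma vaddA x y z : vadd x (vadd y z) = vadd (vadd x y) z.
Proof. by apply/ffunP => i; rewrite !ffunE addbA. Qed.

Lemma vaddAC x y z : vadd (vadd x y) z = vadd (vadd x z) y.
Proof. by apply/ffunP => i; rewrite !ffunE addbAC. Qed.

Lemma vaddK x y : vadd (vadd x y) y = x.
Proof. by apply/ffunP => i; rewrite !ffunE addbK. Qed.

Lemma vaddKl x y : vadd x (vadd x y) = y.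
Proof. by apply/ffunP => i; rewrite !ffunE addKb. Qed.

Lemma vadd0 x : vadd x v0 = x.
Proof. by apply/ffunP => i; rewrite !ffunE addbF. Qed.

Lemma vadd0l x : vadd v0 x = x.
Proof. by apply/ffunP => i; rewrite !ffunE. Qed.

Lemma vaddvv x : vadd x x = v0.
Proof. by apply/ffunP => i; rewrite !ffunE addbb. Qed.

Lemma vadd_inj x : injective (vadd x).
Proof. exact: can_inj (vaddKl x). Qed.

Lemma vadd_eq0 x y : (vadd x y == v0) = (x == y).
Proof.
apply/eqP/eqP => [/ffunP xy|->]; last by apply/ffunP => i; rewrite !ffunE addbb.
by apply/ffunP => i; move: (xy i); rewrite !ffunE; case: (x i); case: (y i).
Qed.

Lemma vadd_eqr x y : (vadd x y == x) = (y == v0).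
Proof. by rewrite -{2}(vadd0 x) (inj_eq (@vadd_inj x)). Qed.

Lemma vadd_eqE x y z : (vadd x y == z) = (y == vadd x z).
Proof. by rewrite -(inj_eq (@vadd_inj x)) vaddKl. Qed.

End Vectors.

Section Cayley.
Variables (n : nat) (S : {set V n}) (r : rel (V n)).
Hypothesis rE : forall x y, r x y = (vadd x y \in S).
Hypothesis S0 : v0 n \notin S.
(* connectivity of [r], as an induction principle *)
Hypothesis r_ind : forall Q : V n -> Prop,
  (forall x y, r x y -> Q x -> Q y) -> forall x0, Q x0 -> forall x, Q x.
Implicit Types (x y z g u : V n) (D : {set V n}) (L : {ffun V n -> 'I_4}).

Lemma cayley_sym : symmetric r.
Proof. by move=> x y; rewrite !rE vaddC. Qed.

Lemma cayley_add x g : r x (vadd x g) = (g \in S).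
Proof. by rewrite rE vaddKl. Qed.

Lemma card_cayley_nbrs x : #|[set y | r x y]| = #|S|.
Proof.
rewrite -[RHS](card_imset _ (@vadd_inj _ x)); apply: eq_card => y; rewrite inE rE.
apply/idP/imsetP => [xyS|[g gS ->]]; last by rewrite vaddKl.
by exists (vadd x y); rewrite ?vaddKl.
Qed.

Definition trans_dirs L x := [set g | is_transition r L x (vadd x g)].

Definition trans_cayley L D := forall x y, is_transition r L x y = (vadd x y \in D).

Lemma card_trans_dirs L x : #|trans_dirs L x| = #|trans_nbrs r L x|.
Proof.
rewrite -[LHS](card_imset _ (@vadd_inj _ x)); apply: eq_card => y; rewrite inE.
apply/imsetP/idP => [[g]|txy]; first by rewrite inE => txg ->.
by exists (vadd x y); rewrite ?inE vaddKl.
Qed.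

Lemma trans_cayleyP L D : trans_cayley L D <-> forall x, trans_dirs L x = D.
Proof.
split=> [trD x|dirsD x y]; first by apply/setP => g; rewrite inE trD vaddKl.
by rewrite -(dirsD x) inE vaddKl.
Qed.

Lemma trans_cayley_sub L D : trans_cayley L D -> D \subset S.
Proof.
move=> trD; apply/subsetP => g; rewrite -(vaddKl (v0 n) g) -trD.
by move/transition_adj; rewrite rE.
Qed.

Lemma card_trans_cayley L D x : trans_cayley L D -> #|trans_nbrs r L x| = #|D|.
Proof. by move/trans_cayleyP => dirsD; rewrite -card_trans_dirs dirsD. Qed.

Lemma trans_cayley_edges L D :
  trans_cayley L D <-> trans_edges r L = edges (fun x y => vadd x y \in D).
Proof.
rewrite trans_edgesE; split=> [trD|/edges_inj trD x y]; first exact: eq_edges.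
apply: trD => [{}x {}y|{}x {}y]; last by rewrite vaddC.
exact/transitionC/cayley_sym.
Qed.

Section TransitionDegreeTwo.
Hypothesis S4 : 4 <= #|S|.
Variable L : {ffun V n -> 'I_4}.
Hypothesis L_proper : proper_col r L.
Hypothesis deg2 : forall x, #|trans_nbrs r L x| = 2.
Notation tr := (is_transition r L).

Let deg2S x : (#|trans_nbrs r L x|).+2 = 4.
Proof. by rewrite deg2. Qed.

Lemma exists_nontrans_nbr x a : exists z, [/\ r x z, ~~ tr x z & z != a].
Proof.
have : 1 < #|[set y | r x y] :\: trans_nbrs r L x|.
  rewrite cardsDS ?card_cayley_nbrs ?deg2 ?ltn_subRL //.
  by apply/subsetP => y; rewrite !inE => /transition_adj.
case/card_gt1P => z1 [z2 [+ + z12]]; rewrite !inE => /andP[ntz1 rxz1] /andP[ntz2 rxz2].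
have [z1a|z1a] := eqVneq z1 a; last by exists z1.
by exists z2; split; rewrite // -z1a eq_sym.
Qed.

(* Otherwise the non-transition neighbours x and y + u of y = x + g share a
   colour, although y + u is adjacent to the transition neighbour x + u of x. *)
Lemma trans_dirs_nontrans x g : g \in S -> g \notin trans_dirs L x ->
  trans_dirs L (vadd x g) = trans_dirs L x.
Proof.
move=> gS gx; set y := vadd x g.
apply/esym/eqP; rewrite eqEcard !card_trans_dirs !deg2 leqnn andbT.
apply/subsetP => u; rewrite !inE => txu; apply/negPn/negP => nyu.
have ryx : r y x by rewrite rE vaddC vaddKl.
have nyx : ~~ tr y x by rewrite (transitionC L cayley_sym); rewrite inE in gx.
have uS : u \in S by rewrite -(cayley_add x) (transition_adj txu).
have ryyu : r y (vadd y u) by rewrite cayley_add.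
have Lyu := nontrans_nbr_col_eq cayley_sym L_proper (deg2S y) ryyu ryx nyu nyx.
have ryu : r (vadd x u) (vadd y u) by rewrite rE /y [vadd (vadd x g) u]vaddAC vaddKl.
have yux : vadd y u != x.
  by rewrite /y -vaddA vadd_eqr vadd_eq0; apply: contraNneq gx => ->; rewrite inE.
by move: (transition_nbr_col L_proper txu ryu yux); rewrite Lyu eqxx.
Qed.

(* Otherwise x + g has a non-transition neighbour z <> x + g + w, and z + g
   avoids the colours of x, x + g, x + w and x + g + w, four distinct colours. *)
Lemma trans_dirs_shared x g w : g \in trans_dirs L x -> w \in trans_dirs L x -> w != g ->
  w \in trans_dirs L (vadd x g).
Proof.
rewrite !inE => txx' txw wg; apply/negPn/negP => ntw.
have tx'x : tr (vadd x g) x by rewrite (transitionC L cayley_sym).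
have gS : g \in S by rewrite -(cayley_add x) (transition_adj txx').
have wS : w \in S by rewrite -(cayley_add x) (transition_adj txw).
have trx y : tr x y = (y == vadd x g) || (y == vadd x w).
  have /eqP dirs_x : [set g; w] == trans_dirs L x.
    by rewrite eqEcard subUset !sub1set !inE txx' txw card_trans_dirs deg2 cards2 [g == w]eq_sym wg.
  by have := in_set2 (vadd x y) g w; rewrite dirs_x inE vaddKl !vadd_eqE.
have off c : c != L x -> c != L (vadd x g) -> c != L (vadd x w) ->
    c \notin L @: (x |: trans_nbrs r L x).
  by move=> cx cx' cxw; apply: notin_star_col => // y; rewrite trx => /orP[]/eqP->.
have rx'w : r (vadd x g) (vadd (vadd x g) w) by rewrite cayley_add.
have x'w_off : L (vadd (vadd x g) w) \notin L @: (x |: trans_nbrs r L x).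
  apply: off.
  - have := transition_nbr_col L_proper txx' rx'w; apply.
    by rewrite -vaddA vadd_eqr vadd_eq0 eq_sym.
  - by rewrite eq_sym (proper_colP L_proper).
  - by rewrite (proper_colP L_proper) // rE (_ : vadd _ (vadd x w) = g) //; vadd_bits.
have [z [rx'z ntz zw]] := exists_nontrans_nbr (vadd x g) (vadd (vadd x g) w).
have Lz := nontrans_nbr_col_eq cayley_sym L_proper (deg2S _) rx'z rx'w ntz ntw.
have rxzg : r x (vadd z g).
  by rewrite rE (_ : vadd x (vadd z g) = vadd (vadd x g) z) -?rE //; vadd_bits.
have zg_off : L (vadd z g) \notin L @: (x |: trans_nbrs r L x).
  apply: off.
  - by rewrite eq_sym (proper_colP L_proper).
  - have := transition_nbr_col L_proper tx'x rxzg; apply.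
    rewrite vaddC [vadd x g]vaddC (inj_eq (@vadd_inj _ g)).
    by apply: contraNneq ntz => ->.
  - have txwx : tr (vadd x w) x by rewrite (transitionC L cayley_sym).
    have := transition_nbr_col L_proper txwx rxzg; apply.
    rewrite vaddC -(inj_eq (@vadd_inj _ g)) vaddKl.
    by rewrite (_ : vadd g (vadd x w) = vadd (vadd x g) w) //; vadd_bits.
have := off_star_col_eq cayley_sym L_proper (deg2S x) x'w_off zg_off.
by rewrite -Lz => /eqP; apply/negP; rewrite (proper_colP L_proper) // cayley_add.
Qed.

Lemma trans_dirs_trans x g : g \in trans_dirs L x ->
  trans_dirs L (vadd x g) = trans_dirs L x.
Proof.
move=> gx; have /cards2P[a [b [ab dirsE]]] : #|trans_dirs L x| == 2.
  by rewrite card_trans_dirs deg2.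
have [w wg dirs_x] : exists2 w, w != g & trans_dirs L x = [set g; w].
  move: gx; rewrite dirsE => /set2P[->|->]; first by exists b; rewrite // eq_sym.
  by exists a; rewrite // setUC.
apply/esym/eqP; rewrite eqEcard !card_trans_dirs !deg2 leqnn andbT dirs_x.
rewrite subUset !sub1set andbC (trans_dirs_shared gx) ?dirs_x ?set22 //=.
by move: gx; rewrite !inE vaddK (transitionC L cayley_sym).
Qed.

Lemma trans_dirs_step x g : g \in S -> trans_dirs L (vadd x g) = trans_dirs L x.
Proof.
move=> gS; have [gx|gx] := boolP (g \in trans_dirs L x).
  exact: trans_dirs_trans.
exact: trans_dirs_nontrans.
Qed.

Lemma trans_cayley_dirs x0 : trans_cayley L (trans_dirs L x0).
Proof.
apply/trans_cayleyP => x.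
apply: (r_ind (Q := fun x => trans_dirs L x = trans_dirs L x0) _ (erefl _)) => y z ryz <-.
by rewrite -[z](vaddKl y) trans_dirs_step // -rE.
Qed.

End TransitionDegreeTwo.

Lemma trans_deg2P L : 4 <= #|S| -> proper_col r L ->
  (forall x, #|trans_nbrs r L x| = 2) <->
  exists v w, [/\ v \in S, w \in S, v != w & trans_cayley L [set v; w]].
Proof.
move=> S4 L_proper; split=> [deg2|[v [w [_ _ vw trvw]]] x]; last first.
  by rewrite (card_trans_cayley x trvw) cards2 vw.
have trD := trans_cayley_dirs S4 L_proper deg2 (v0 n).
have /cards2P[v [w [vw DE]]] : #|trans_dirs L (v0 n)| == 2.
  by rewrite -(card_trans_cayley (v0 n) trD) deg2.
have /subsetP DS := trans_cayley_sub trD.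
by exists v, w; split; rewrite -?DE //; apply: DS; rewrite DE ?set21 ?set22.
Qed.

Lemma S_neq0 g : g \in S -> g != v0 n.
Proof. by apply: contraTneq => ->. Qed.

Definition cayley_square (v w x : V n) :=
  cyc4 x (vadd x v) (vadd (vadd x v) w) (vadd x w).

Section Squares.
Variables (L : {ffun V n -> 'I_4}) (v w : V n).
Hypotheses (trans_vw : trans_cayley L [set v; w]) (vw : v != w).
Notation tr := (is_transition r L).
Notation square := (cayley_square v w).

Let vS : v \in S. Proof. exact: subsetP (trans_cayley_sub trans_vw) v (set21 v w). Qed.
Let wS : w \in S. Proof. exact: subsetP (trans_cayley_sub trans_vw) w (set22 v w). Qed.

Lemma square_uniq x : uniq [:: x; vadd x v; vadd (vadd x v) w; vadd x w].
Proof.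
rewrite /= !inE !negb_or -!vaddA ![x == _]eq_sym !vadd_eqr !(inj_eq (@vadd_inj _ x)).
rewrite vadd_eq0 [v == vadd _ _]eq_sym vadd_eqr [vadd v w]vaddC vadd_eqr.
by rewrite !S_neq0 ?vw.
Qed.

Lemma trans_square x : [&& tr x (vadd x v), tr (vadd x v) (vadd (vadd x v) w),
  tr (vadd (vadd x v) w) (vadd x w) & tr (vadd x w) x].
Proof.
rewrite !trans_vw !in_set2 !vaddKl [vadd (vadd x w) x]vaddC vaddKl !eqxx !orbT.
by rewrite (_ : vadd _ (vadd x w) = v) ?eqxx //; vadd_bits.
Qed.

Lemma square_4cycle x : is_4cycle r (square x).
Proof.
exists x, (vadd x v), (vadd (vadd x v) w), (vadd x w); split => //.
  exact: square_uniq.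
by case/and4P: (trans_square x) => /transition_adj-> /transition_adj->
  /transition_adj-> /transition_adj->.
Qed.

Lemma square_sub x : square x \subset trans_edges r L.
Proof.
have tr_sym := transitionC L cayley_sym.
case/and4P: (trans_square x) => t1 t2 t3 t4.
apply/subsetP => e; rewrite cyc4E !in_cons in_nil orbF trans_edgesE.
by case/or4P => /eqP->; rewrite mem_edges.
Qed.

Lemma square_shift x y : y \in verts (square x) -> square y = square x.
Proof.
rewrite verts_cyc4 !inE => /or4P[]/eqP-> //; rewrite /cayley_square.
- rewrite vaddK (_ : vadd (vadd x v) w = vadd (vadd x w) v) ?vaddK; last by vadd_bits.
  by rewrite cyc4_rev cyc4_rot cyc4_rot.
- rewrite (_ : vadd (vadd (vadd x v) w) v = vadd x w); last by vadd_bits.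
  by rewrite !vaddK cyc4_rot cyc4_rot.
- rewrite (_ : vadd (vadd x w) v = vadd (vadd x v) w) ?vaddK; last by vadd_bits.
  by rewrite cyc4_rev.
Qed.

Lemma trans_cayley_tiles : tiles_in_4cycles r (trans_edges r L).
Proof.
exists [set square x | x : V n]; split.
- by move=> C /imsetP[x _ ->]; apply: square_4cycle.
- apply/setP => e; apply/idP/bigcupP => [|[C /imsetP[x _ ->]]]; last first.
    exact: subsetP (square_sub x) e.
  rewrite trans_edgesE inE => /existsP[a /existsP[b /andP[tab /eqP->]]].
  exists (square a); first exact: imset_f.
  move: tab; rewrite trans_vw in_set2 !vadd_eqE cyc4E !inE.
  by case/orP => /eqP->; rewrite ?[[set a; _]]setUC eqxx ?orbT.
- move=> C1 C2 /imsetP[x1 _ ->] /imsetP[x2 _ ->] ne.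
  suff vdisj : [disjoint verts (square x1) & verts (square x2)].
    by split; last exact: disjoint_cyc4.
  apply/pred0P => y /=; apply/negP => /andP[y1 y2].
  by move: ne; rewrite -(square_shift y1) -(square_shift y2) eqxx.
- move=> y; rewrite -(cards1 (square y)); apply: eq_card => C.
  rewrite !inE; apply/andP/eqP => [[/imsetP[x _ ->] /square_shift]|->] //.
  by split; [apply: imset_f | rewrite verts_cyc4 inE eqxx].
Qed.

Hypothesis L_proper : proper_col r L.

Lemma square_col x g : g \in S -> g \notin [set v; w] ->
  L (vadd x g) = L (vadd (vadd x v) w).
Proof.
move=> gS gvw.
have deg_x : (#|trans_nbrs r L x|).+2 = 4 by rewrite (card_trans_cayley x trans_vw) cards2 vw.
have trx y : tr x y = (y == vadd x v) || (y == vadd x w).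
  by rewrite trans_vw in_set2 !vadd_eqE.
have rxg : r x (vadd x g) by rewrite cayley_add.
have ntg : ~~ tr x (vadd x g).
  by rewrite trans_vw vaddKl.
have rxwvw : r (vadd x w) (vadd (vadd x v) w).
  by rewrite rE (_ : vadd _ _ = v) //; vadd_bits.
have vw_off : L (vadd (vadd x v) w) \notin L @: (x |: trans_nbrs r L x).
  apply: notin_star_col => [|y]; last rewrite trx => /orP[]/eqP->.
  - have txw : tr x (vadd x w) by rewrite trx eqxx orbT.
    have := transition_nbr_col L_proper txw rxwvw; apply.
    by rewrite -vaddA vadd_eqr vadd_eq0.
  - by rewrite eq_sym (proper_colP L_proper) // cayley_add.
  - by rewrite eq_sym (proper_colP L_proper).
have g_off := nontrans_nbr_col cayley_sym L_proper rxg ntg.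
by have := off_star_col_eq cayley_sym L_proper deg_x g_off vw_off.
Qed.

End Squares.

Lemma trans_cayley_cyc4 L v w a b c d :
  trans_cayley L [set v; w] -> uniq [:: a; b; c; d] -> cyc4 a b c d \subset trans_edges r L ->
  [/\ vadd a b != vadd b c, [set v; w] = [set vadd a b; vadd b c] & d = vadd a (vadd b c)].
Proof.
move=> trvw u /subsetP cyc_sub.
have tr_edge p q : [set p; q] \in cyc4 a b c d -> vadd p q \in [set v; w].
  by move/cyc_sub; rewrite trans_edgesE mem_edges -?trvw //; apply: transitionC cayley_sym.
have tab : vadd a b \in [set v; w] by apply: tr_edge; rewrite cyc4E inE eqxx.
have tbc : vadd b c \in [set v; w] by apply: tr_edge; rewrite cyc4E !inE eqxx orbT.
have tda : vadd d a \in [set v; w] by apply: tr_edge; rewrite cyc4E !inE eqxx !orbT.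
move: u; rewrite /= !inE !negb_or => /and3P[/and3P[ab ac ad] /andP[bc bd] _].
have pq : vadd a b != vadd b c by rewrite [vadd a b]vaddC (inj_eq (@vadd_inj _ b)).
have vwE : [set v; w] = [set vadd a b; vadd b c].
  apply/esym/eqP; rewrite eqEcard subUset !sub1set tab tbc !cards2 pq.
  by case: (v != w).
split=> //; move: tda; rewrite vwE in_set2 [vadd d a]vaddC => /orP[]/eqP da.
  by move: bd; rewrite -(vadd_inj da) eqxx.
by rewrite -da vaddKl.
Qed.

Section Uniqueness.
Variables (L1 L2 : {ffun V n -> 'I_4}) (v w : V n).
Hypotheses (L1_proper : proper_col r L1) (L2_proper : proper_col r L2).
Hypotheses (trans1 : trans_cayley L1 [set v; w]) (trans2 : trans_cayley L2 [set v; w]).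
Hypothesis vw : v != w.

Lemma trans_cayley_col_eq x0 :
  {in [set x0; vadd x0 v; vadd x0 w; vadd (vadd x0 v) w], L1 =1 L2} -> L1 = L2.
Proof.
(* agreement on a coset of the subgroup H = <v, w> spreads along edges *)
move=> agree; pose H := [set v0 n; v; w; vadd v w].
have addvH s : s \in H -> vadd s v \in H.
  rewrite /H !inE -!orbA => /or4P[]/eqP->;
  by rewrite ?(vaddAC v w) ?vaddvv ?vadd0l ?(vaddC w) ?eqxx ?orbT.
have addwH s : s \in H -> vadd s w \in H.
  rewrite /H !inE -!orbA => /or4P[]/eqP->;
  by rewrite ?vaddK ?vaddvv ?vadd0l ?eqxx ?orbT.
pose Q x := forall s, s \in H -> L1 (vadd x s) = L2 (vadd x s).
have Q_step x y : r x y -> Q x -> Q y.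
  move=> rxy Qx s sH; rewrite -[y](vaddKl x) -vaddA.
  have [gvw|gvw] := boolP (vadd x y \in [set v; w]).
    by apply: Qx; rewrite vaddC; case/set2P: gvw => ->; [apply: addvH|apply: addwH].
  have gS : vadd x y \in S by rewrite -rE.
  rewrite (_ : vadd x _ = vadd (vadd x s) (vadd x y)); last by vadd_bits.
  rewrite (square_col trans1 vw L1_proper _ gS gvw) (square_col trans2 vw L2_proper _ gS gvw).
  rewrite (_ : vadd (vadd _ v) w = vadd x (vadd (vadd s v) w)); last by vadd_bits.
  exact/Qx/addwH/addvH.
have Qx0 : Q x0.
  move=> s; rewrite /H !inE -!orbA => /or4P[]/eqP-> ; apply: agree;
    by rewrite !inE ?vadd0 ?vaddA eqxx ?orbT.
apply/ffunP => x; rewrite -[x]vadd0; apply: (r_ind Q_step Qx0).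
by rewrite /H !inE eqxx.
Qed.

End Uniqueness.

End Cayley.

Section HammingGraph.
Variable n : nat.
Implicit Types x y u : V n.

Definition vone : V n := [ffun=> true].
Definition vcompl1 (i : 'I_n) : V n := [ffun j => j != i].
Definition vunit (i : 'I_n) : V n := [ffun j => j == i].

Lemma H2E x y : H2 n x y = (vadd x y \in N0 n).
Proof.
rewrite /H2 inE /hdist /wt; congr (_ <= _); apply: eq_card => i.
by rewrite !inE ffunE; case: (x i); case: (y i).
Qed.

Lemma wt_eq0 u : (wt u == 0) = (u == v0 n).
Proof.
rewrite cards_eq0; apply/eqP/eqP => [/setP u0|->]; last by apply/setP => i; rewrite !inE ffunE.
by apply/ffunP => i; move: (u0 i); rewrite !inE ffunE => ->.
Qed.

Lemma N0E : N0 n = vone |: [set vcompl1 i | i : 'I_n].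
Proof.
apply/setP => u; rewrite !inE; apply/idP/idP => [wt_u|].
  have [/forallP u1|] := boolP [forall i, u i].
    by apply/orP; left; apply/eqP/ffunP => i; rewrite ffunE u1.
  rewrite negb_forall => /existsP[i ui]; apply/orP; right; apply/imsetP; exists i => //.
  have sub : [set j | u j] \subset [set~ i].
    by apply/subsetP => j; rewrite !inE; apply: contraTneq => ->.
  have /eqP/setP uE : [set j | u j] == [set~ i].
    by rewrite eqEcard sub cardsC1 card_ord.
  by apply/ffunP => j; move: (uE j); rewrite !inE ffunE.
case/orP => [/eqP->|/imsetP[i _ ->]]; rewrite /wt.
  by rewrite (eq_card (B := 'I_n)) ?card_ord ?leq_pred // => i; rewrite !inE ffunE.
by rewrite (eq_card (B := [set~ i])) ?cardsC1 ?card_ord // => j; rewrite !inE ffunE.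
Qed.

Lemma card_N0 : #|N0 n| = n.+1.
Proof.
have vcompl1_inj : injective vcompl1.
  by move=> i j /ffunP/(_ i); rewrite !ffunE eqxx => /esym/negbFE/eqP.
rewrite N0E cardsU1 card_imset // card_ord.
suff -> : vone \notin [set vcompl1 i | i : 'I_n] by [].
by apply/imsetP => -[i _ /ffunP/(_ i)]; rewrite !ffunE eqxx.
Qed.

Lemma v0_notin_N0 : 1 < n -> v0 n \notin N0 n.
Proof.
move=> n_gt1; rewrite inE -ltnNge (_ : wt (v0 n) = 0); first lia.
by apply/eqP; rewrite wt_eq0.
Qed.

Lemma H2_ind (Q : V n -> Prop) :
  (forall x y, H2 n x y -> Q x -> Q y) -> forall x0, Q x0 -> forall x, Q x.
Proof.
move=> Q_step x0 Qx0 x.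
have Q_flip y i : Q y -> Q (vadd y (vunit i)).
  have -> : vadd y (vunit i) = vadd (vadd y vone) (vcompl1 i).
    by apply/ffunP => j; rewrite !ffunE; case: (y j); case: (j == i).
  move=> Qy; apply: (Q_step (vadd y vone)); last apply: (Q_step y) Qy.
    by rewrite H2E vaddKl N0E !inE imset_f ?orbT.
  by rewrite H2E vaddKl N0E !inE eqxx.
rewrite -(vaddKl x0 x); move: (vadd x0 x) => u.
elim: {u}(wt u).+1 {-2}u (ltnSn (wt u)) => // m IH u wt_u.
have [u0|/card_gt0P[i]] := posnP (wt u).
  by move/eqP: u0; rewrite wt_eq0 => /eqP->; rewrite vadd0.
rewrite inE => ui.
have wt_ui : wt (vadd u (vunit i)) < m.
  rewrite /wt; have -> : [set j | vadd u (vunit i) j] = [set j | u j] :\ i.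
    by apply/setP => j; rewrite !inE !ffunE; case: eqP => [->|]; rewrite ?ui ?addbF.
  by have := cardsD1 i [set j | u j]; rewrite inE ui; rewrite /wt in wt_u; lia.
by rewrite -(vaddK u (vunit i)) vaddA; apply/Q_flip/IH.
Qed.

End HammingGraph.

Section H2Colourings.
Variable n : nat.
Hypothesis hn : 3 <= n.
Implicit Types (v w : V n) (L : {ffun V n -> 'I_4}).

Lemma H2_sym : symmetric (H2 n).
Proof. exact: cayley_sym (@H2E n). Qed.

Lemma v0_notin_H2 : v0 n \notin N0 n.
Proof. exact: v0_notin_N0 (ltnW hn). Qed.

Lemma card_H2_nbrs x : #|[set y | H2 n x y]| = n.+1.
Proof. by rewrite (card_cayley_nbrs (@H2E n)) card_N0. Qed.

Lemma H2_trans_edges_set2P L :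
  (exists v w, [/\ v \in N0 n, w \in N0 n, v != w &
    trans_edges (H2 n) L = [set e : {set V n} | [exists x : V n, exists y : V n,
      ((vadd x y == v) || (vadd x y == w)) && (e == [set x; y])]]]) <->
  exists v w, [/\ v \in N0 n, w \in N0 n, v != w & trans_cayley (H2 n) L [set v; w]].
Proof.
have edgesE v w : [set e : {set V n} | [exists x : V n, exists y : V n,
    ((vadd x y == v) || (vadd x y == w)) && (e == [set x; y])]] =
    edges (fun x y => vadd x y \in [set v; w]).
  by apply: eq_edges => x y; rewrite in_set2.
split=> -[v [w [vN wN vw trL]]]; exists v, w; split=> //.
  by apply/(trans_cayley_edges (@H2E n)); rewrite -edgesE.
by rewrite edgesE; apply/(trans_cayley_edges (@H2E n)).
Qed.

Lemma H2_rbE L : proper_col (H2 n) L ->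
  rb (H2 n) L = (2%:R / n.+1%:R)%R <-> #|trans_edges (H2 n) L| = #|V n|.
Proof.
move=> L_proper.
have V_gt0 : 0 < #|V n| by apply/card_gt0P; exists (v0 n).
have rbE : (rb (H2 n) L == (2%:R / n.+1%:R)%R) =
    (2 * #|trans_edges (H2 n) L| == 2 * #|V n|)
  := rb_eqE H2_sym L_proper card_H2_nbrs (ltn0Sn n) V_gt0.
rewrite eqn_pmul2l // in rbE.
by split=> [/eqP|E]; [rewrite rbE => /eqP | apply/eqP; rewrite rbE E].
Qed.

Lemma H2_card_trans_edgesP L : proper_col (H2 n) L ->
  #|trans_edges (H2 n) L| = #|V n| <->
  exists v w, [/\ v \in N0 n, w \in N0 n, v != w & trans_cayley (H2 n) L [set v; w]].
Proof.
move=> L_proper; have N0_4 : 4 <= #|N0 n| by rewrite card_N0.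
apply: iff_trans (trans_deg2P (@H2E n) (@H2_ind n) N0_4 L_proper).
have /= leif := card_trans_edges_leif H2_sym L_proper card_H2_nbrs hn.
split=> [E x|deg2].
  by move/eqP: E; rewrite -(eqn_pmul2l (isT : 0 < 2)) leif => /forallP/(_ x)/eqP.
apply/eqP; rewrite -(eqn_pmul2l (isT : 0 < 2)) leif.
by apply/forallP => x; rewrite deg2.
Qed.

End H2Colourings.

Unset Implicit Arguments.

Theorem theorem5p2 (n : nat) (hn : (3 <= n)%N) (K : {ffun V n -> 'I_4})
  (hK : proper_col (H2 n) K) :
  let cond_i (L : {ffun V n -> 'I_4}) :=
    exists v w : V n, [/\ v \in N0 n, w \in N0 n, v != w &
      trans_edges (H2 n) L =
        [set e : {set V n} | [exists x : V n, exists y : V n,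
           ((vadd x y == v) || (vadd x y == w)) && (e == [set x; y])]]] in
  [/\ (cond_i K <-> rb (H2 n) K = (2%:R / n.+1%:R)%R),
      (rb (H2 n) K = (2%:R / n.+1%:R)%R <-> tiles_in_4cycles (H2 n) (trans_edges (H2 n) K))
    & forall K' : {ffun V n -> 'I_4}, proper_col (H2 n) K' -> cond_i K -> cond_i K' ->
      forall a b c d : V n, uniq [:: a; b; c; d] ->
        cyc4 a b c d \subset trans_edges (H2 n) K ->
        cyc4 a b c d \subset trans_edges (H2 n) K' ->
        K a = K' a -> K b = K' b -> K c = K' c -> K d = K' d ->
        K = K'].
Proof.
move=> cond_i.
have cardP := H2_card_trans_edgesP hn.
split.
- apply: iff_trans (H2_trans_edges_set2P K) _.
  exact: iff_sym (iff_trans (H2_rbE hK) (cardP K hK)).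
- split=> [/(H2_rbE hK)/(cardP K hK)[v [w [_ _ vw trK]]]|/card_tiling tileK].
    by have := trans_cayley_tiles (@H2E n) (v0_notin_H2 hn) trK vw.
  exact/(H2_rbE hK).
move=> K' hK' /H2_trans_edges_set2P[v [w [_ _ vw trK]]].
move=> /H2_trans_edges_set2P[v' [w' [_ _ _ trK']]] a b c d abcd cycK cycK' Ka Kb Kc Kd.
have [pq vwE dE] := trans_cayley_cyc4 (@H2E n) trK abcd cycK.
have [_ vwE' _] := trans_cayley_cyc4 (@H2E n) trK' abcd cycK'.
rewrite vwE in trK; rewrite vwE' in trK'.
apply: (trans_cayley_col_eq (@H2E n) (@H2_ind n) hK hK' trK trK' pq (x0 := a)).
rewrite !vaddKl -dE.
by move=> x; rewrite !inE -!orbA => /or4P[]/eqP->.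
Qed.
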